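(* For every integer $n \geq 1$, $D_n = Der_n + (-1)^{n-1}$. Equivalently, $D_n = n!\sum_{k=0}^{n-1}\frac{(-1)^k}{k!}$.
   Context: A linear arrangement of $\{1,\ldots,n\}$ is a sequence $a_1\cdots a_n$ in which each of $1,\ldots,n$ appears exactly once. It contains the pattern $ij$ if $a_t=i$ and $a_{t+1}=j$ for some $t$; otherwise it avoids it. $D_n$ is the number of linear arrangements of $\{1,\ldots,n\}$ avoiding all of the patterns $12, 23, \ldots, (n-1)n, n1$. $Der_n = n!\sum_{k=0}^n \frac{(-1)^k}{k!}$ is the $n$-th derangement number, the number of permutations of $\{1,\ldots,n\}$ with no fixed point. *)

From mathcomp Require Import all_boot all_order all_algebra all_fingroup.
Set Implicit Arguments. Unset Strict Implicit. Unset Printing Implicit Defensive.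
Import GRing.Theory Num.Theory.
Local Open Scope ring_scope.

(* A linear arrangement a_1 ... a_n of {1..n} is encoded as a permutation
   s : 'S_n of 'I_n, position t (0-based) holding value (s t).+1.
   Values are shifted down by one: value i in {1..n} is encoded as i-1.
   Pattern ij (i,j in {1..n}) occurs iff a_t = i and a_{t+1} = j for some t. *)

Definition contains_pattern (n : nat) (s : 'S_n) (i j : nat) : bool :=
  [exists t : 'I_n, exists t' : 'I_n,
     [&& (t'.+1 == t.+1.+1)%N, ((s t).+1 == i)%N & ((s t').+1 == j)%N]].

Definition avoids_all (n : nat) (s : 'S_n) : bool :=
  [forall i : 'I_n,
     ~~ contains_pattern s i.+1 (if (i.+1 < n)%N then i.+2 else 1%N)].

Definition D (n : nat) : nat := #|[set s : 'S_n | avoids_all s]|.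

Definition Der (n : nat) : rat :=
  (n`!)%:R * \sum_(k < n.+1) (-1) ^+ k / (k`!)%:R.

From mathcomp Require Import all_boot all_order all_algebra all_fingroup.
Import GRing.Theory Num.Theory.
Set Implicit Arguments. Unset Strict Implicit. Unset Printing Implicit Defensive.

(* Inclusion-exclusion over the set X of cyclic successions i -> i+1 (mod n)
   that an arrangement is required to contain.  Requiring a succession a -> b
   glues b onto a: deleting b is a bijection onto the arrangements of the cycle
   with b contracted into a, which has one point less.  Hence if X is a proper
   subset of the n successions, exactly (n - |X|)! arrangements contain X,
   while none contains all of them (the first entry would have to follow its
   cyclic predecessor).  So
   D_n = sum_{k<n} (-1)^k C(n,k) (n-k)! = n! sum_{k<n} (-1)^k / k!. *)

Section Successions.
Variable T : eqType.
Implicit Types (s c X : seq T) (a b x y z : T).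

Lemma infix2_cons x y z s :
  infix [:: x; y] (z :: s) = (z == x) && prefix [:: y] s || infix [:: x; y] s.
Proof. by rewrite infix_consl prefix_cons eq_sym. Qed.

Lemma infix2_mem x y s : infix [:: x; y] s -> x \in s.
Proof. by move/mem_infix; apply; apply: mem_head. Qed.

Lemma infix2_behead x y s : infix [:: x; y] s -> y \in behead s.
Proof.
case/infixP=> [[|w p] [q ->]] /=; first by rewrite inE eqxx.
by rewrite mem_cat !inE eqxx !orbT.
Qed.

Lemma infix2_nthP x0 x y s :
  reflect (exists2 k, k.+1 < size s & nth x0 s k = x /\ nth x0 s k.+1 = y)
          (infix [:: x; y] s).
Proof.
elim: s => [|z s IHs]; first by right; case.
rewrite infix2_cons; apply: (iffP orP) => [[/andP[/eqP<-]|/IHs[k ks xy]]|[[|k]]].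
- by case: s {IHs} => // w s; rewrite /= prefix0s andbT => /eqP<-; exists 0.
- by exists k.+1.
- by case: s {IHs} => //= w s _ [<- <-]; left; rewrite !eqxx prefix0s.
- by move=> /= ks xy; right; apply/IHs; exists k.
Qed.

Section InsertAfter.
Variables a b : T.

Fixpoint ins_after s :=
  if s is x :: s' then if x == a then x :: b :: s' else x :: ins_after s'
  else [::].

Lemma prefix1_ins_after y s : prefix [:: y] (ins_after s) = prefix [:: y] s.
Proof. by case: s => // x s /=; case: ifP => _; rewrite !prefix_cons !prefix0s. Qed.

Lemma rem_ins_after s : b \notin s -> rem b (ins_after s) = s.
Proof.
elim: s => //= x s IHs; rewrite inE negb_or eq_sym => /andP[/negbTE bx bs].
by case: ifP => _ /=; rewrite bx ?eqxx ?IHs.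
Qed.

Lemma perm_ins_after s : a \in s -> perm_eq (ins_after s) (b :: s).
Proof.
elim: s => //= x s IHs; rewrite inE.
have swap_xb : perm_eq [:: x, b & s] [:: b, x & s] by rewrite (perm_catCA [:: x] [:: b]).
case: eqVneq => [_ _|_ /= /IHs]; first exact: swap_xb.
by rewrite -(perm_cons x) => /perm_trans; apply.
Qed.

Lemma infix_ins_after s : a \in s -> infix [:: a; b] (ins_after s).
Proof.
elim: s => //= x s IHs; rewrite inE.
case: eqVneq => [-> _|xa /IHs ab_s]; first exact: prefix_infix.
by rewrite infix2_cons ab_s orbT.
Qed.

Lemma ins_after_rem s : uniq s -> infix [:: a; b] s -> ins_after (rem b s) = s.
Proof.
elim: s => // x s IHs; rewrite cons_uniq infix2_cons => /andP[xs us].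
have [xa|xa] := eqVneq x a; first subst x.
  case/orP=> [|/infix2_mem a_s]; last by rewrite a_s in xs.
  case: s xs {IHs us} => // y s; rewrite inE negb_or prefix_cons prefix0s andbT.
  move=> /andP[ay _] /eqP yb; subst y.
  by rewrite /= (negbTE ay) eqxx /= eqxx.
move=> /= ab_s.
have bx : x != b by apply: contraNneq xs => ->; exact/mem_behead/(infix2_behead ab_s).
by rewrite (negbTE bx) /= (negbTE xa) IHs.
Qed.

Lemma infix_ins_after_inserted y s :
  uniq s -> b \notin s -> infix [:: b; y] (ins_after s) = infix [:: a; y] s.
Proof.
elim: s => // x s IHs; rewrite cons_uniq inE negb_or => /andP[xs us] /andP[bx bs].
rewrite /=; have [xa|xa] := eqVneq x a.
  subst x; rewrite !infix2_cons [a == b]eq_sym (negbTE bx) !eqxx /=.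
  by rewrite (contraNF (@infix2_mem b y s) bs) (contraNF (@infix2_mem a y s) xs).
by rewrite !infix2_cons eq_sym (negbTE bx) IHs.
Qed.

Lemma infix_ins_after_other x y s :
  x != a -> x != b -> infix [:: x; y] (ins_after s) = infix [:: x; y] s.
Proof.
move=> xa xb; elim: s => // z s IHs; rewrite [ins_after _]/=.
have [->|_] := eqVneq z a; last by rewrite !infix2_cons prefix1_ins_after IHs.
by rewrite !infix2_cons ![_ == x]eq_sym (negbTE xa) (negbTE xb).
Qed.

End InsertAfter.

Lemma count_adjacent_glue c a b (P : pred (seq T)) :
    uniq c -> a \in c -> b \in c -> a != b ->
  count (fun s => infix [:: a; b] s && P s) (permutations c) =
  count (P \o ins_after a b) (permutations (rem b c)).
Proof.
move=> uc ac bc ab; have b_rem : b \notin rem b c by rewrite mem_rem_uniqF.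
have perm_rem_b t : perm_eq t (rem b c) -> perm_eq (b :: t) c.
  by rewrite -(perm_cons b) => /perm_trans; apply; rewrite perm_sym perm_to_rem.
have glued : perm_eq [seq s <- permutations c | infix [:: a; b] s]
                     (map (ins_after a b) (permutations (rem b c))).
  apply: uniq_perm; first by rewrite filter_uniq ?permutations_uniq.
    rewrite map_inj_in_uniq ?permutations_uniq //; apply: (can_in_inj (g := rem b)).
    by move=> t; rewrite mem_permutations => /perm_mem pt; rewrite rem_ins_after ?pt.
  move=> s; rewrite mem_filter mem_permutations.
  apply/andP/mapP => [[ab_s ps]|[t + ->]].
    have us : uniq s by rewrite (perm_uniq ps).
    have bs : b \in s := mem_behead (infix2_behead ab_s).
    exists (rem b s); last by rewrite ins_after_rem.
    rewrite mem_permutations -(perm_cons b).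
    by rewrite -(permPl (perm_to_rem bs)) -(permPr (perm_to_rem bc)).
  rewrite mem_permutations => pt.
  have a_t : a \in t by rewrite (perm_mem pt) rem_mem.
  split; first exact: infix_ins_after.
  exact: perm_trans (perm_ins_after b a_t) (perm_rem_b t pt).
transitivity (count P [seq s <- permutations c | infix [:: a; b] s]).
  by rewrite count_filter; apply: eq_count => s; rewrite /= andbC.
by rewrite (seq.permP glued) count_map.
Qed.

Lemma next_contract a b rest x : x != a ->
  next (a :: rest) (if x == b then a else x) = next [:: a, b & rest] x.
Proof.
rewrite /next /=; have [-> ba|xb xa] := eqVneq x b.
  by rewrite (negbTE ba); case: rest => [|z rest] /=; rewrite !eqxx.
by rewrite (negbTE xa); case: rest => [|z rest] /=; rewrite (negbTE xa) (negbTE xb).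
Qed.

#[local] Arguments next : simpl never.

Definition contains_succs c X s := all (fun x => infix [:: x; next c x] s) X.

Lemma count_contains_succs_rot i c X : uniq c ->
  count (contains_succs (rot i c) X) (permutations (rot i c)) =
  count (contains_succs c X) (permutations c).
Proof.
move=> uc; have rot_c : perm_eq (rot i c) c by rewrite perm_rot.
rewrite (seq.permP (perm_permutations rot_c)).
by apply: eq_count => s; apply: eq_all => x; rewrite next_rot.
Qed.

Lemma count_contains_succs_contract a b rest X :
    uniq [:: a, b & rest] -> a \notin X ->
  count (contains_succs [:: a, b & rest] (a :: X)) (permutations [:: a, b & rest]) =
  count (contains_succs (a :: rest) [seq if x == b then a else x | x <- X])
        (permutations (a :: rest)).
Proof.
set c := [:: a, b & rest] => uc aX.
have ab : a != b by move: uc; rewrite /= inE negb_or => /andP[/andP[]].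
have rem_b : rem b c = a :: rest by rewrite /= eqxx (negbTE ab).
have next_a : next c a = b by rewrite /next /= eqxx.
rewrite (eq_count (a2 := fun s => infix [:: a; b] s && contains_succs c X s)); last first.
  by move=> s; rewrite -next_a.
rewrite (count_adjacent_glue (contains_succs c X)) ?mem_head ?inE ?eqxx ?orbT // rem_b.
apply: eq_in_count => t; rewrite mem_permutations => pt.
have [ut bt] : uniq t /\ b \notin t.
  by rewrite (perm_uniq pt) (perm_mem pt) -rem_b rem_uniq ?mem_rem_uniqF.
rewrite /contains_succs all_map; apply: eq_in_all => x xX /=.
have xa : x != a by apply: contraNneq aX => <-.
rewrite next_contract //; have [->|xb] := eqVneq x b.
  exact: infix_ins_after_inserted.
exact: infix_ins_after_other.
Qed.

Lemma count_contains_succs c X :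
    uniq c -> uniq X -> {subset X <= c} -> size X < size c ->
  count (contains_succs c X) (permutations c) = (size c - size X)`!.
Proof.
have [k] := ubnP (size X); elim: k c X => // k IHk c [_ uc _ _ _|a X].
  by rewrite (eq_count (a2 := predT)) // count_predT size_permutations // subn0.
rewrite ltnS cons_uniq => sizeX uc /andP[aX uX] Xc ltXc.
have [i [|b rest] rot_c] := rot_to (Xc a (mem_head a X)).
  by move: ltXc; rewrite -(size_rot i c) rot_c ltnS ltn0.
have urot : uniq [:: a, b & rest] by rewrite -rot_c rot_uniq.
have Xrot : {subset X <= [:: a, b & rest]}.
  by move=> x xX; rewrite -rot_c mem_rot Xc // inE xX orbT.
have size_c : size c = (size rest).+2 by rewrite -(size_rot i c) rot_c.
have Xa x : x \in X -> x != a by move=> xX; apply: contraNneq aX => <-.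
rewrite -(count_contains_succs_rot i) // rot_c count_contains_succs_contract //.
rewrite IHk ?size_map ?size_c //.
- by move: urot; rewrite /= inE negb_or => /and3P[/andP[_ ->] _ ->].
- rewrite map_inj_in_uniq //.
  apply: (can_in_inj (g := fun y => if y == a then b else y)) => x /Xa xa /=.
  by have [->|_] := eqVneq x b; rewrite ?eqxx // (negbTE xa).
- move=> _ /mapP[x xX ->]; case: eqVneq => [_|xb]; first exact: mem_head.
  by move: (Xrot x xX); rewrite !inE (negbTE xb).
- by move: ltXc; rewrite size_c /= !ltnS.
Qed.

Lemma count_contains_succs_full c X :
  c != [::] -> uniq c -> {subset c <= X} -> count (contains_succs c X) (permutations c) = 0.
Proof.
move=> c0 uc cX; apply/eqP; rewrite -leqn0 leqNgt -has_count; apply/hasPn => s.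
rewrite mem_permutations; case: s => [|v s] pc.
  by move: c0; rewrite -size_eq0 -(perm_size pc).
have vc : v \in c by rewrite -(perm_mem pc) mem_head.
apply/allPn; exists (prev c v); first by rewrite cX ?mem_prev.
rewrite next_prev //; apply/negP => /infix2_behead /= vs.
by move: (perm_uniq pc); rewrite uc /= vs.
Qed.

End Successions.

Lemma val_ordS n (i : 'I_n) : ordS i = (if i.+1 < n then i.+1 else 0) :> nat.
Proof.
case: ltnP => [|ge_in]; first exact: modn_small.
by rewrite /= (@anti_leq i.+1 n) ?ltn_ord // modnn.
Qed.

Lemma next_enum_ord n : next (enum 'I_n) =1 @ordS n.
Proof.
move=> i; apply: ord_inj; rewrite val_ordS next_nth mem_enum /=.
case def_e: (enum 'I_n) => [|j e]; first by move: (mem_enum 'I_n i); rewrite def_e.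
rewrite -def_e index_enum_ord -[nth j e i]/(nth j (j :: e) i.+1) -def_e.
case: ltnP => [lt_in|ge_in]; first by rewrite nth_enum_ord.
rewrite nth_default ?size_enum_ord //.
by have := nth_enum_ord j (leq_ltn_trans (leq0n i) (ltn_ord i)); rewrite def_e.
Qed.

Lemma perm_graphs (T : finType) :
  perm_eq [seq map s (enum T) | s : {perm T} <- enum {perm T}] (permutations (enum T)).
Proof.
have uniq_graphs : uniq [seq map s (enum T) | s : {perm T} <- enum {perm T}].
  rewrite map_inj_uniq ?enum_uniq // => s1 s2 /eq_in_map eq12.
  by apply/permP => x; apply: eq12; rewrite mem_enum.
apply: uniq_perm (permutations_uniq _) _ => //.
apply: (uniq_min_size uniq_graphs _ _).2 => [_ /mapP[s _ ->]|].
  rewrite mem_permutations; apply: uniq_perm; rewrite ?enum_uniq //.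
    by rewrite (map_inj_uniq (@perm_inj _ s)) enum_uniq.
  by move=> x; rewrite -codomE perm_onto mem_enum.
rewrite size_map size_permutations ?enum_uniq // -!cardE -cardsT -card_perm.
by apply/eq_leq/eq_card => s; rewrite !inE; apply/subsetP => x; rewrite inE.
Qed.

Definition cyclic_succs n (l : seq 'I_n) : {set 'I_n} := [set i | infix [:: i; ordS i] l].

Lemma contains_pattern_infix n (s : 'S_n) (i j : 'I_n) :
  contains_pattern s i.+1 j.+1 = infix [:: i; j] (map s (enum 'I_n)).
Proof.
have nth_graph (t : 'I_n) : nth i (map s (enum 'I_n)) t = s t.
  by rewrite (nth_map t) ?size_enum_ord // nth_ord_enum.
apply/existsP/(infix2_nthP i) => [[t /existsP[t' /and3P[/eqP[tt'] si sj]]]|[k]].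
  exists t; first by rewrite size_map size_enum_ord -tt'.
  by rewrite -tt' !nth_graph; split; apply/ord_inj/eqP; rewrite -eqSS.
rewrite size_map size_enum_ord => kn [si sj]; exists (Ordinal (ltnW kn)).
apply/existsP; exists (Ordinal kn).
by rewrite /= eqxx -(nth_graph (Ordinal (ltnW kn))) -(nth_graph (Ordinal kn)) /= si sj !eqxx.
Qed.

Lemma avoids_allE n (s : 'S_n) :
  avoids_all s = (cyclic_succs (map s (enum 'I_n)) == set0).
Proof.
have succ_ord (i : 'I_n) : (if i.+1 < n then i.+2 else 1) = (ordS i).+1.
  by rewrite val_ordS; case: ifP.
apply/forallP/eqP => [avoid|/setP succs0 i]; last first.
  by move: (succs0 i); rewrite !inE succ_ord contains_pattern_infix => ->.
apply/setP => i; rewrite !inE; move: (avoid i).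
by rewrite succ_ord contains_pattern_infix => /negbTE.
Qed.

Lemma D_count n : D n = count (fun l => cyclic_succs l == set0) (permutations (enum 'I_n)).
Proof.
rewrite /D cardsE cardE /enum_mem size_filter -enumT.
rewrite -(seq.permP (perm_graphs 'I_n)) [RHS]count_map.
by apply: eq_count => s; rewrite [RHS]/= -avoids_allE.
Qed.

Lemma count_cyclic_succs n (X : {set 'I_n}) : 0 < n ->
  count (fun l => X \subset cyclic_succs l) (permutations (enum 'I_n)) =
  if #|X| == n then 0 else (n - #|X|)`!.
Proof.
move=> n_gt0.
rewrite (eq_count (a2 := contains_succs (enum 'I_n) (enum X))); last first.
  move=> l; apply/subsetP/allP => [succs i|succs i iX].
    by rewrite mem_enum => /succs; rewrite inE next_enum_ord.
  by rewrite inE -next_enum_ord; apply: succs; rewrite mem_enum.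

have [cardX|ltXn] := eqVneq #|X| n.
  have XT : X = setT.
    by apply/eqP; rewrite eqEcard subsetT cardsT cardT size_enum_ord cardX leqnn.
  rewrite count_contains_succs_full ?enum_uniq //.
    by rewrite -size_eq0 size_enum_ord -lt0n.
  by move=> i _; rewrite XT mem_enum inE.
rewrite count_contains_succs ?enum_uniq ?size_enum_ord -?cardE //.
  by move=> i _; rewrite mem_enum.
by rewrite ltn_neqAle ltXn -[n in _ <= n]card_ord max_card.
Qed.

Local Open Scope ring_scope.

Lemma sum_subsets_card (R : nmodType) (T : finType) (A : {set T}) (F : nat -> R) :
  \sum_(X : {set T} | X \subset A) F #|X| = \sum_(k < #|A|.+1) F k *+ 'C(#|A|, k).
Proof.
rewrite (partition_big (fun X : {set T} => inord #|X| : 'I_#|A|.+1) predT) //=.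
apply: eq_bigr => k _; rewrite -cards_draws -sumr_const.
apply: eq_big => [X|X /andP[sXA /eqP <-]]; last by rewrite inordK // ltnS subset_leq_card.
rewrite inE; case sXA: (X \subset A) => //=.
by rewrite -(inj_eq val_inj) /= inordK // ltnS subset_leq_card.
Qed.

Lemma sum_sets_card (R : nmodType) (T : finType) (F : nat -> R) :
  \sum_(X : {set T}) F #|X| = \sum_(k < #|T|.+1) F k *+ 'C(#|T|, k).
Proof. by rewrite -cardsT -sum_subsets_card; apply: eq_bigl => X; rewrite subsetT. Qed.

Lemma sum_subsets_sign (R : ringType) (T : finType) (A : {set T}) :
  \sum_(X : {set T} | X \subset A) (-1) ^+ #|X| = (A == set0)%:R :> R.
Proof.
rewrite sum_subsets_card; have := exprD1n (-1 : R) #|A|.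
by rewrite addNr expr0n cards_eq0 => ->.
Qed.

Lemma inclusion_exclusion (R : ringType) (I : finType) (U : Type)
    (S : U -> {set I}) (L : seq U) :
  (count (fun u => S u == set0) L)%:R =
  \sum_(X : {set I}) (-1) ^+ #|X| * (count (fun u => X \subset S u) L)%:R :> R.
Proof.
have natr_count (P : pred U) : (count P L)%:R = \sum_(u <- L) (P u)%:R :> R.
  by rewrite -sum1_count natr_sum big_mkcond; apply: eq_bigr => u _; case: (P u).
rewrite natr_count; under eq_bigr do rewrite -sum_subsets_sign big_mkcond.
rewrite exchange_big; apply: eq_bigr => X _ /=; rewrite natr_count mulr_sumr.
by apply: eq_bigr => u _; case: (X \subset S u); rewrite ?mulr1 ?mulr0.
Qed.

Lemma natr_bin_fact (R : numFieldType) n k : (k <= n)%N ->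
  ('C(n, k) * (n - k)`!)%:R = n`!%:R / k`!%:R :> R.
Proof.
move=> le_kn; rewrite -(bin_fact le_kn) [in RHS]mulnCA [in RHS]mulnC [in RHS]natrM mulfK //.
by rewrite pnatr_eq0 -lt0n fact_gt0.
Qed.

Lemma Der_add_sign n : (0 < n)%N ->
  Der n + (-1) ^+ n.-1 = n`!%:R * \sum_(k < n) (-1) ^+ k / k`!%:R.
Proof.
case: n => // n _; rewrite /Der big_ord_recr mulrDr /= -addrA mulrCA mulfV.
  by rewrite mulr1 exprS mulN1r addNr addr0.
by rewrite pnatr_eq0 -lt0n fact_gt0.
Qed.

Theorem proposition2p4 (n : nat) (hn : (1 <= n)%N) :
  (D n)%:R = Der n + (-1) ^+ n.-1 :> rat.
Proof.
rewrite Der_add_sign // D_count inclusion_exclusion.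
under eq_bigr do rewrite count_cyclic_succs //.
rewrite (@sum_sets_card _ _ (fun k => (-1) ^+ k * (if k == n then 0 else (n - k)`!)%:R)).
rewrite card_ord big_ord_recr /= eqxx mulr0 mul0rn addr0 mulr_sumr.
apply: eq_bigr => k _; rewrite (ltn_eqF (ltn_ord k)) -mulrnAr -mulr_natr -natrM mulnC.
by rewrite natr_bin_fact 1?ltnW // mulrCA.
Qed.
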